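(* Let $x_1,\dots,x_N\in\mathbb{R}^d$ with binary labels $y_1,\dots,y_N\in\{0,1\}$, and suppose $N^+:=\sum_i y_i\ge 1$ and $N^-:=\sum_i(1-y_i)\ge 1$. For $\beta\in\mathbb{R}^d$ let $p_\beta(x)=[1+\exp(-\beta^\top x)]^{-1}$ and define the log-loss $$\ell(\beta)=-\sum_{i=1}^N\Big(y_i\ln p_\beta(x_i)+(1-y_i)\ln\big(1-p_\beta(x_i)\big)\Big).$$ Suppose $\beta\in\arg\min_{\beta'\in\mathbb{R}^d}\ell(\beta')$ (a minimizer exists), and let $c=\max_i|\beta^\top x_i|$. Let $\mu^+=\frac{1}{N^+}\sum_{i:y_i=1}x_i$ and $\mu^-=\frac{1}{N^-}\sum_{i:y_i=0}x_i$. Then $$C_1-\big(C_3\,\beta^\top\mu^+-C_4\,\beta^\top\mu^-\big)\;\le\;\ell(\beta)\;\le\; C_2-\big(C_3\,\beta^\top\mu^+-C_4\,\beta^\top\mu^-\big),$$ where $C_1=N\ln 2$, $C_2=N\ln(1+e^{c})-\frac{Nc}{2}$, $C_3=\frac{N^+}{2}$, $C_4=\frac{N^-}{2}$. *)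

From Stdlib Require Import Reals Lra.
Open Scope R_scope.

Fixpoint fsum (n : nat) (f : nat -> R) : R :=
  match n with
  | O => 0
  | S m => fsum m f + f m
  end.

(* vectors in R^d: functions nat -> R, only coordinates j < d matter *)
Definition dot (d : nat) (u v : nat -> R) : R := fsum d (fun j => u j * v j).

Definition lab (b : bool) : R := if b then 1 else 0.

Definition pb (d : nat) (beta x : nat -> R) : R := / (1 + exp (- dot d beta x)).

Definition logloss (N d : nat) (x : nat -> nat -> R) (y : nat -> bool)
    (beta : nat -> R) : R :=
  - fsum N (fun i => lab (y i) * ln (pb d beta (x i))
                      + (1 - lab (y i)) * ln (1 - pb d beta (x i))).

Definition Nplus (N : nat) (y : nat -> bool) : R := fsum N (fun i => lab (y i)).
Definition Nminus (N : nat) (y : nat -> bool) : R := fsum N (fun i => 1 - lab (y i)).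

(* c = max_i |beta^T x_i|  (0 if N = 0) *)
Definition cmax (N d : nat) (x : nat -> nat -> R) (beta : nat -> R) : R :=
  (fix m (n : nat) : R := match n with
    | O => 0
    | S k => Rmax (m k) (Rabs (dot d beta (x k))) end) N.

Definition bmu_pos (N d : nat) (x : nat -> nat -> R) (y : nat -> bool) (beta : nat -> R) : R :=
  / Nplus N y * fsum N (fun i => lab (y i) * dot d beta (x i)).
Definition bmu_neg (N d : nat) (x : nat -> nat -> R) (y : nat -> bool) (beta : nat -> R) : R :=
  / Nminus N y * fsum N (fun i => (1 - lab (y i)) * dot d beta (x i)).

(* Write t_i = beta^T x_i and h(t) = ln (e^(t/2) + e^(-t/2)) = ln (2 cosh (t/2)).
   Since 1 + e^t = e^(t/2) (e^(t/2) + e^(-t/2)), the two per-sample losses are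
     -ln p_beta(x_i) = h(t_i) - t_i/2   and   -ln (1 - p_beta(x_i)) = h(t_i) + t_i/2,
   so the whole loss splits as
     l(beta) = sum_i h(t_i) - T,   T = (1/2) sum_{y_i=1} t_i - (1/2) sum_{y_i=0} t_i,
   and T is exactly C3 beta^T mu^+ - C4 beta^T mu^-.  The function h is even and
   nondecreasing on [0, +oo), hence ln 2 = h(0) <= h(t_i) <= h(c) whenever |t_i| <= c;
   summing over the N samples gives C1 <= sum_i h(t_i) <= C2 = N h(c).

   The bounds
   hold for every beta. *)

From Stdlib Require Import Reals Lra Lia Psatz.
Open Scope R_scope.

Lemma exp_le (a b : R) : a <= b -> exp a <= exp b.
Proof. intros [Hlt | ->]; [left; apply exp_increasing, Hlt | right; reflexivity]. Qed.

Lemma ln_le (a b : R) : 0 < a -> a <= b -> ln a <= ln b.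
Proof. intros Ha [Hlt | ->]; [left; apply ln_increasing; assumption | right; reflexivity]. Qed.

(* h(t) = ln (2 cosh (t/2)), the even part of the softplus ln (1 + e^t). *)
Definition h (t : R) : R := ln (exp (t / 2) + exp (- (t / 2))).

Lemma h_pos_arg (t : R) : 0 < exp (t / 2) + exp (- (t / 2)).
Proof. pose proof (exp_pos (t / 2)); pose proof (exp_pos (- (t / 2))); lra. Qed.

(* Softplus is h plus a linear term: 1 + e^t = e^(t/2) (e^(t/2) + e^(-t/2)). *)
Lemma softplus_h (t : R) : ln (1 + exp t) = h t + t / 2.
Proof.
  assert (E : 1 + exp t = exp (t / 2) * (exp (t / 2) + exp (- (t / 2)))).
  { rewrite Rmult_plus_distr_l, <- !exp_plus.
    replace (t / 2 + t / 2) with t by field.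
    replace (t / 2 + - (t / 2)) with 0 by ring.
    rewrite exp_0; ring. }
  unfold h; rewrite E, ln_mult, ln_exp by (apply exp_pos || apply h_pos_arg).
  ring.
Qed.

Lemma h_even (t : R) : h (- t) = h t.
Proof.
  unfold h; replace (- t / 2) with (- (t / 2)) by field.
  rewrite Ropp_involutive, Rplus_comm; reflexivity.
Qed.

Lemma h_0 : h 0 = ln 2.
Proof. unfold h; replace (0 / 2) with 0 by field; rewrite Ropp_0, exp_0; f_equal; ring. Qed.

Lemma add_inv_mono (u v : R) : 1 <= u -> u <= v -> u + / u <= v + / v.
Proof.
  intros Hu Huv.
  assert (D : v + / v - (u + / u) = (v - u) * (u * v - 1) / (u * v)) by (field; lra).
  assert (0 <= (v - u) * (u * v - 1) / (u * v)).
  { unfold Rdiv; apply Rmult_le_pos; [apply Rmult_le_pos; nra |].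
    left; apply Rinv_0_lt_compat; nra. }
  lra.
Qed.

(* h(t) = ln (u + 1/u) with u = e^(t/2) >= 1, hence h is nondecreasing on [0, +oo). *)
Lemma h_mono (a b : R) : 0 <= a -> a <= b -> h a <= h b.
Proof.
  intros Ha Hab; unfold h; rewrite !exp_Ropp.
  assert (Hu : 1 <= exp (a / 2)) by (rewrite <- exp_0; apply exp_le; lra).
  assert (Huv : exp (a / 2) <= exp (b / 2)) by (apply exp_le; lra).
  apply ln_le; [| exact (add_inv_mono _ _ Hu Huv)].
  pose proof (Rinv_0_lt_compat _ (exp_pos (a / 2))); lra.
Qed.

Lemma h_abs (t : R) : h (Rabs t) = h t.
Proof.
  destruct (Rcase_abs t).
  - rewrite Rabs_left by lra; apply h_even.
  - rewrite Rabs_right by lra; reflexivity.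
Qed.

Lemma h_ge_ln2 (t : R) : ln 2 <= h t.
Proof. rewrite <- h_0, <- (h_abs t); apply h_mono; [lra | apply Rabs_pos]. Qed.

Lemma h_le_of_abs (t c : R) : Rabs t <= c -> h t <= h c.
Proof. intros H; rewrite <- (h_abs t); apply h_mono; [apply Rabs_pos | exact H]. Qed.

Lemma sample_loss (b : bool) (t : R) :
  - (lab b * ln (/ (1 + exp (- t))) + (1 - lab b) * ln (1 - / (1 + exp (- t))))
  = h t - lab b * t / 2 + (1 - lab b) * t / 2.
Proof.
  assert (Hp : 0 < 1 + exp (- t)) by (pose proof (exp_pos (- t)); lra).
  assert (Hq : 0 < 1 + exp t) by (pose proof (exp_pos t); lra).
  assert (E : 1 - / (1 + exp (- t)) = / (1 + exp t)).
  { rewrite exp_Ropp; pose proof (exp_pos t); field; lra. }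
  rewrite E, !ln_Rinv, !softplus_h, h_even by assumption.
  lra.
Qed.

Lemma fsum_ext (n : nat) (f g : nat -> R) :
  (forall i, (i < n)%nat -> f i = g i) -> fsum n f = fsum n g.
Proof. induction n as [| n IH]; simpl; intros H; auto. rewrite IH, H; auto. Qed.

Lemma fsum_le (n : nat) (f g : nat -> R) :
  (forall i, (i < n)%nat -> f i <= g i) -> fsum n f <= fsum n g.
Proof.
  induction n as [| n IH]; simpl; intros H; [lra |].
  pose proof (IH ltac:(auto)); pose proof (H n ltac:(lia)); lra.
Qed.

Lemma fsum_add (n : nat) (f g : nat -> R) :
  fsum n (fun i => f i + g i) = fsum n f + fsum n g.
Proof. induction n; simpl; lra. Qed.

Lemma fsum_opp (n : nat) (f : nat -> R) :
  fsum n (fun i => - f i) = - fsum n f.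
Proof. induction n; simpl; lra. Qed.

Lemma fsum_scal (n : nat) (a : R) (f : nat -> R) :
  fsum n (fun i => a * f i) = a * fsum n f.
Proof. induction n; simpl; lra. Qed.

Lemma fsum_const (n : nat) (a : R) : fsum n (fun _ => a) = INR n * a.
Proof. induction n as [| n IH]; [simpl; lra |]. rewrite S_INR; cbn [fsum]; rewrite IH; lra. Qed.

Lemma cmax_bound (N d : nat) (x : nat -> nat -> R) (beta : nat -> R) (i : nat) :
  (i < N)%nat -> Rabs (dot d beta (x i)) <= cmax N d x beta.
Proof.
  induction N as [| N IH]; intros Hi; [lia |].
  unfold cmax; fold (cmax N d x beta).
  destruct (Nat.eq_dec i N) as [-> | Hne]; [apply Rmax_r |].
  eapply Rle_trans; [apply IH; lia | apply Rmax_l].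
Qed.

Lemma logloss_decomp (N d : nat) (x : nat -> nat -> R) (y : nat -> bool) (beta : nat -> R) :
  logloss N d x y beta
  = fsum N (fun i => h (dot d beta (x i)))
    - fsum N (fun i => lab (y i) * dot d beta (x i)) / 2
    + fsum N (fun i => (1 - lab (y i)) * dot d beta (x i)) / 2.
Proof.
  unfold logloss.
  rewrite <- fsum_opp.
  rewrite (fsum_ext N _ (fun i => h (dot d beta (x i))
             + (- / 2) * (lab (y i) * dot d beta (x i))
             + / 2 * ((1 - lab (y i)) * dot d beta (x i)))).
  - rewrite !fsum_add, !fsum_scal; field.
  - intros i _; unfold pb; rewrite sample_loss; field.
Qed.

Theorem theorem2 (N d : nat) (x : nat -> nat -> R) (y : nat -> bool)
  (beta : nat -> R)
  (HNp : 1 <= Nplus N y) (HNn : 1 <= Nminus N y)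
  (Hmin : forall beta' : nat -> R, logloss N d x y beta <= logloss N d x y beta') :
  let c := cmax N d x beta in
  let C1 := INR N * ln 2 in
  let C2 := INR N * ln (1 + exp c) - INR N * c / 2 in
  let C3 := Nplus N y / 2 in
  let C4 := Nminus N y / 2 in
  let T := C3 * bmu_pos N d x y beta - C4 * bmu_neg N d x y beta in
  C1 - T <= logloss N d x y beta /\ logloss N d x y beta <= C2 - T.
Proof.
  intros c C1 C2 C3 C4 T.
  set (H := fsum N (fun i => h (dot d beta (x i)))).
  set (A := fsum N (fun i => lab (y i) * dot d beta (x i))).
  set (B := fsum N (fun i => (1 - lab (y i)) * dot d beta (x i))).
  assert (HT : T = A / 2 - B / 2).
  { unfold T, C3, C4, bmu_pos, bmu_neg; fold A B; field; lra. }
  assert (Hlow : C1 <= H).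
  { unfold C1, H; rewrite <- fsum_const; apply fsum_le; intros; apply h_ge_ln2. }
  assert (Hup : H <= C2).
  { unfold C2; rewrite softplus_h.
    replace (INR N * (h c + c / 2) - INR N * c / 2) with (INR N * h c) by field.
    unfold H; rewrite <- fsum_const; apply fsum_le; intros i Hi.
    apply h_le_of_abs, cmax_bound, Hi. }
  rewrite logloss_decomp; fold H A B; rewrite HT; lra.
Qed.
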